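(* Let $n\ge k\ge 1$ be integers, $i\in\{1,\ldots,n\}$, let $H\sim\text{Hyp}(n,i,k)$, and fix an integer $m\in \{0,1,\ldots,\min\{i,k\}\}$. Then \[ \mathbb{P}(H \ge m) = \frac{\binom{k}{m}\cdot \binom{i}{m}}{\binom{n}{m}} \cdot \mathbb{E}\left(\frac{1}{\binom{Z_m+m}{m}} \right), \] where $Z_m\sim\text{Hyp}(n-m,i-m,k-m)$.
   Context: $\text{Hyp}(N,a,b)$ (for integers $0\le a\le N$, $0\le b\le N$) denotes the hypergeometric distribution: the number of black marbles in a sample without replacement of size $b$ from an urn with $a$ black and $N-a$ white marbles, i.e. $\mathbb{P}(Z=j)=\binom{a}{j}\binom{N-a}{b-j}/\binom{N}{b}$ for $j\in\{\max\{0,b-(N-a)\},\ldots,\min\{a,b\}\}$ (in degenerate cases with $a=0$ or $b=0$ this is the point mass at $0$). *)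

From mathcomp Require Import all_boot all_order all_algebra.
Unset Printing Implicit Defensive.
Import Order.TTheory GRing.Theory Num.Theory.
Local Open Scope ring_scope.

(* pmf of Hyp(N,a,b) at j: C(a,j) C(N-a,b-j) / C(N,b), and 0 for j > b
   (nat binomials already vanish off the remaining support bounds). *)
Definition hyp_pmf (R : realFieldType) (N a b j : nat) : R :=
  if (j <= b)%N then
    ('C(a, j) * 'C(N - a, b - j))%:R / ('C(N, b))%:R
  else 0.

Definition hyp_prob_ge (R : realFieldType) (N a b m : nat) : R :=
  \sum_(j < b.+1 | (m <= j)%N) hyp_pmf R N a b j.

Definition hyp_expect (R : realFieldType) (N a b : nat) (f : nat -> R) : R :=
  \sum_(j < b.+1) hyp_pmf R N a b j * f j.

From mathcomp Require Import all_boot all_order all_algebra.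
From mathcomp Require Import ring zify.
Import Order.TTheory GRing.Theory Num.Theory.
Local Open Scope ring_scope.

(* Both factors come from the
   "subset of a subset" identity [C(i,j) C(j,m) = C(i,m) C(i-m,j-m)], applied
   to [C(i, Z+m)] and to [C(n,k)] in the hypergeometric weights. *)

Lemma mul_bin_bin i j m : (m <= j)%N ->
  ('C(i, j) * 'C(j, m) = 'C(i, m) * 'C(i - m, j - m))%N.
Proof.
move=> le_mj; have [lt_ij|le_ji] := ltnP i j.
  rewrite bin_small // mul0n; have [le_mi|lt_im] := leqP m i.
    by rewrite (@bin_small (i - m)) ?muln0 //; lia.
  by rewrite bin_small.
have le_mi : (m <= i)%N by apply: leq_trans le_ji.
apply/eqP; rewrite -(@eqn_pmul2r (m`! * (j - m)`! * (i - j)`!)); last first.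
  by rewrite !muln_gt0 !fact_gt0.
have fact_ij := bin_fact le_ji; have fact_jm := bin_fact le_mj.
have fact_im := bin_fact le_mi.
have fact_im_jm := @bin_fact (i - m) (j - m) (leq_sub2r m le_ji).
have sub_sub : (i - m - (j - m) = i - j)%N by lia.
rewrite sub_sub in fact_im_jm.
have -> : ('C(i, j) * 'C(j, m) * (m`! * (j - m)`! * (i - j)`!)
          = 'C(i, j) * ('C(j, m) * (m`! * (j - m)`!)) * (i - j)`!)%N by ring.
have -> : ('C(i, m) * 'C(i - m, j - m) * (m`! * (j - m)`! * (i - j)`!)
          = 'C(i, m) * (m`! * ('C(i - m, j - m) * ((j - m)`! * (i - j)`!))))%N.
  by ring.
by rewrite fact_jm fact_im_jm -mulnA fact_ij fact_im.
Qed.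

Lemma natr_bin_neq0 (R : numDomainType) n k :
  (k <= n)%N -> ('C(n, k)%:R : R) != 0.
Proof. by move=> le_kn; rewrite pnatr_eq0 -lt0n bin_gt0. Qed.

Lemma natr_bin_split (R : numFieldType) i j m : (m <= j)%N ->
  ('C(i, j)%:R : R) = 'C(i, m)%:R * 'C(i - m, j - m)%:R / 'C(j, m)%:R.
Proof.
by move=> le_mj; rewrite -natrM -mul_bin_bin // natrM mulfK // natr_bin_neq0.
Qed.

Lemma hyp_pmf_addn (R : realFieldType) N a b m z :
  (m <= a)%N -> (m <= b)%N -> (b <= N)%N -> (z <= b - m)%N ->
  hyp_pmf R N a b (z + m) =
    'C(b, m)%:R * 'C(a, m)%:R / 'C(N, m)%:R *
    (hyp_pmf R (N - m) (a - m) (b - m) z / 'C(z + m, m)%:R).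
Proof.
move=> le_ma le_mb le_bN le_z; have le_zmb : (z + m <= b)%N by lia.
rewrite /hyp_pmf le_z le_zmb.
have -> : (N - m - (a - m) = N - a)%N by lia.
have -> : (b - m - z = b - (z + m))%N by lia.
rewrite !natrM (natr_bin_split R a _ _ (leq_addl z m)) addnK.
rewrite (natr_bin_split R N _ _ le_mb).
by field; rewrite !natr_bin_neq0 //; lia.
Qed.

Lemma hyp_prob_ge_shift (R : realFieldType) N a b m : (m <= b)%N ->
  hyp_prob_ge R N a b m = \sum_(z < (b - m).+1) hyp_pmf R N a b (z + m).
Proof.
move=> le_mb.
have -> : hyp_prob_ge R N a b m = \sum_(m <= j < b.+1) hyp_pmf R N a b j.
  by rewrite big_geq_mkord.
by rewrite -{1}(add0n m) big_addn subSn // big_mkord.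
Qed.

Theorem lemma3 (R : realFieldType) (n k i m : nat)
  (hk1 : (1 <= k)%N) (hkn : (k <= n)%N) (hi1 : (1 <= i)%N) (hin : (i <= n)%N)
  (hm : (m <= minn i k)%N) :
  hyp_prob_ge R n i k m =
    ('C(k, m)%:R * 'C(i, m)%:R / 'C(n, m)%:R) *
    hyp_expect R (n - m) (i - m) (k - m) (fun z => ('C(z + m, m)%:R)^-1).
Proof.
move: hm; rewrite leq_min => /andP[le_mi le_mk].
rewrite hyp_prob_ge_shift // /hyp_expect mulr_sumr.
by apply: eq_bigr => z _; rewrite hyp_pmf_addn // -ltnS.
Qed.
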